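(* Let $d\ge2$, let $A,B$ be $d$-dimensional systems, and let $\rho_{AB}=\dfrac{\mathbb I_{AB}+\beta W}{d^2+d\beta}$ with $\beta\in\mathbb R$, $|\beta|\le1$, where $W=\sum_{i,j}|i\rangle\langle j|\otimes|j\rangle\langle i|$ is the swap operator (a Werner state). Then $$Q^A_{\mathcal N}(\rho_{AB})=Q^{AB}_{\mathcal N}(\rho_{AB})=\frac{|\beta|(d-1)}{2(d+\beta)}.$$
   Context: The negativity of a bipartite state $\tau_{X:Y}$ is $\mathcal N_{X:Y}(\tau)=(\|\tau^\Gamma\|_1-1)/2$ with $\tau^\Gamma$ the partial transpose on one party and $\|\cdot\|_1$ the trace norm. For a system $S$ of dimension $m$ with orthonormal basis $\{|s_k\rangle\}$, the measurement interaction is the isometry $V_S:S\to S\otimes S'$ ($S'$ $m$-dimensional with computational basis $\{|k\rangle\}$), $V_S|s_k\rangle=|s_k\rangle|k\rangle$. One-sided negativity of quantumness: $Q^A_{\mathcal N}(\rho_{AB})=\min\mathcal N_{AB:A'}\big((V_A\otimes\mathbb I_B)\rho_{AB}(V_A\otimes\mathbb I_B)^\dagger\big)$ over orthonormal bases of $A$. Two-sided: $Q^{AB}_{\mathcal N}(\rho_{AB})=\min\mathcal N_{AB:A'B'}\big((V_A\otimes V_B)\rho_{AB}(V_A\otimes V_B)^\dagger\big)$ over orthonormal bases of $A$ and $B$. *)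

From HB Require Import structures.
From mathcomp Require Import all_boot all_order all_algebra.
From mathcomp Require Import sesquilinear spectral.
Set Implicit Arguments. Unset Strict Implicit. Unset Printing Implicit Defensive.
Import Order.TTheory GRing.Theory Num.Theory.
Local Open Scope ring_scope.
Local Open Scope sesquilinear_scope.

Section QDefs.
Variable C : numClosedFieldType.

(* A linear map from the space with basis U to the space with basis T,
   given by its matrix entries <t| M |u>, with T U finite index types. *)
Definition op (T U : finType) := T -> U -> C.

Definition mulop (T U V : finType) (M : op T U) (N : op U V) : op T V :=
  fun x z => \sum_(y : U) M x y * N y z.

Definition adjop (T U : finType) (M : op T U) : op U T :=
  fun x y => (M y x)^*.

Definition mx_of_op (T : finType) (M : op T T) : 'M[C]_#|T| :=
  \matrix_(i, j) M (enum_val i) (enum_val j).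

(* trace norm ||M||_1 = Tr sqrt(M^dagger M) = sum of the square roots of the
   eigenvalues of the (Hermitian, psd) matrix M^dagger M *)
Definition trnorm (T : finType) (M : op T T) : C :=
  let X := mx_of_op M in
  \sum_i sqrtC (spectral_diag (X^t* *m X) 0 i).

Definition ptrans (X Y : finType) (M : op (X * Y)%type (X * Y)%type)
  : op (X * Y)%type (X * Y)%type :=
  fun r c => M (r.1, c.2) (c.1, r.2).

Definition negativity (X Y : finType) (tau : op (X * Y)%type (X * Y)%type) : C :=
  (trnorm (ptrans tau) - 1) / 2.

(* An orthonormal basis {|s_k>} of C^m is encoded by a unitary matrix U
   (U *m U^t* = 1) whose k-th row is |s_k>, i.e. <i|s_k> = U k i.
   Measurement isometry V_S : S -> S (x) S',  V_S |s_k> = |s_k>|k>,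
   i.e. V_S = sum_k |s_k>|k> <s_k| ; entry <(i,k)| V_S |j>. *)
Definition measV (m : nat) (U : 'M[C]_m) : op ('I_m * 'I_m)%type 'I_m :=
  fun p j => U p.2 p.1 * (U p.2 j)^*.

(* V_A (x) I_B : A x B -> (A x B) x A'   (ordered as AB : A') *)
Definition VA_IB (d : nat) (U : 'M[C]_d)
  : op (('I_d * 'I_d) * 'I_d)%type ('I_d * 'I_d)%type :=
  fun r c => measV U (r.1.1, r.2) c.1 * (r.1.2 == c.2)%:R.

(* V_A (x) V_B : A x B -> (A x B) x (A' x B')   (ordered as AB : A'B') *)
Definition VA_VB (d : nat) (U U' : 'M[C]_d)
  : op (('I_d * 'I_d) * ('I_d * 'I_d))%type ('I_d * 'I_d)%type :=
  fun r c => measV U (r.1.1, r.2.1) c.1 * measV U' (r.1.2, r.2.2) c.2.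

Definition conjop (T U : finType) (V : op T U) (rho : op U U) : op T T :=
  mulop V (mulop rho (adjop V)).

Definition is_min_over_unitaries (d : nat) (f : 'M[C]_d -> C) (q : C) : Prop :=
  (exists2 U : 'M[C]_d, U \is unitarymx & f U = q) /\
  (forall U : 'M[C]_d, U \is unitarymx -> q <= f U).

Definition is_min_over_unitaries2 (d : nat) (f : 'M[C]_d -> 'M[C]_d -> C)
  (q : C) : Prop :=
  (exists U U' : 'M[C]_d, [/\ U \is unitarymx, U' \is unitarymx & f U U' = q]) /\
  (forall U U' : 'M[C]_d, U \is unitarymx -> U' \is unitarymx -> q <= f U U').

Definition QA_N_eq (d : nat) (rho : op ('I_d * 'I_d)%type ('I_d * 'I_d)%type)
  (q : C) : Prop :=
  is_min_over_unitaries (fun U => negativity (conjop (VA_IB U) rho)) q.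

Definition QAB_N_eq (d : nat) (rho : op ('I_d * 'I_d)%type ('I_d * 'I_d)%type)
  (q : C) : Prop :=
  is_min_over_unitaries2 (fun U U' => negativity (conjop (VA_VB U U') rho)) q.

Definition swapop (d : nat) : op ('I_d * 'I_d)%type ('I_d * 'I_d)%type :=
  fun r c => ((r.1 == c.2) && (r.2 == c.1))%:R.

Definition werner (d : nat) (beta : C) : op ('I_d * 'I_d)%type ('I_d * 'I_d)%type :=
  fun r c => ((r == c)%:R + beta * swapop r c) / (d%:R ^+ 2 + d%:R * beta).

End QDefs.

Arguments werner {C} d beta.

From HB Require Import structures.
From mathcomp Require Import all_boot all_order all_algebra.
From mathcomp Require Import sesquilinear spectral.
From mathcomp Require Import ring.
Import Order.TTheory GRing.Theory Num.Theory.
Local Open Scope ring_scope.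
Local Open Scope sesquilinear_scope.

(* The trace norm is bounded below by |Tr (Z X)| for every unitary Z and
   above by the sum of the column norms of X.  After either measurement, the
   partial transpose of the measured Werner state has the form
   \sum_a |f_a> y_a <f_(pi a)|, where f is the product basis built from the
   measurement bases and pi is an involution of the index set.  Choosing Z to
   cancel the phases of the y_a gives ||.||_1 >= \sum_a |y_a|, and for the
   computational basis the operator is a weighted permutation matrix, so that
   equality holds.  For the one-sided measurement \sum_a |y_a| does not depend
   on the basis.  For the two-sided one the y_a involve the overlaps
   <s_k|s'_n> of the two bases; their squared moduli form a doubly stochastic
   matrix, which yields a basis-independent lower bound on \sum_a |y_a|,
   attained when both bases are computational. *)

Section IndicatorSums.
Context {R : comPzSemiRingType} {T : finType}.

Lemma sum_mul_delta (F : T -> R) b : \sum_a F a * (a == b)%:R = F b.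
Proof.
rewrite (bigD1 b) //= eqxx mulr1 big1 ?addr0 // => a /negPf ->.
by rewrite mulr0.
Qed.

Lemma sum_delta_mul (F : T -> R) b : \sum_a (b == a)%:R * F a = F b.
Proof.
rewrite -[RHS](sum_mul_delta F b); apply: eq_bigr => a _.
by rewrite eq_sym mulrC.
Qed.

Lemma sum_delta (b : T) : \sum_a (b == a)%:R = 1 :> R.
Proof.
by rewrite -[RHS](sum_delta_mul (fun _ => 1) b); apply: eq_bigr => a _; rewrite mulr1.
Qed.

Lemma sum_pair (J : finType) (G : T * J -> R) :
  \sum_p G p = \sum_i \sum_j G (i, j).
Proof. by rewrite pair_bigA; apply: eq_bigr => -[i j]. Qed.

Lemma sum_pair_mul {J : finType} {G : T * J -> R} (P : T -> R) (Q : J -> R) :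
  (forall i j, G (i, j) = P i * Q j) -> \sum_p G p = (\sum_i P i) * (\sum_j Q j).
Proof.
move=> GE; rewrite sum_pair big_distrlr; apply: eq_bigr => i _.
by apply: eq_bigr => j _; rewrite GE.
Qed.

End IndicatorSums.

Lemma sum_ord_const (R : pzSemiRingType) n (x : R) : \sum_(i < n) x = n%:R * x.
Proof. by rewrite sumr_const card_ord mulr_natl. Qed.

Lemma natr_pair_eq (R : pzSemiRingType) (T1 T2 : eqType) (x1 y1 : T1) (x2 y2 : T2) :
  ((x1, x2) == (y1, y2))%:R = (x1 == y1)%:R * (x2 == y2)%:R :> R.
Proof. by rewrite xpair_eqE -mulnb natrM. Qed.

Section TraceNorm.
Context {C : numClosedFieldType}.

Lemma cauchy_schwarz_sum n (u v : 'I_n -> C) :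
  `|\sum_j u j * v j| <= sqrtC (\sum_j `|u j| ^+ 2) * sqrtC (\sum_j `|v j| ^+ 2).
Proof.
pose x : 'rV[C]_n := \row_j u j.
pose y : 'rV[C]_n := \row_j (v j)^*.
have : `|dotmx x y| <= sqrtC (dotmx x x) * sqrtC (dotmx y y) :=
  (CauchySchwarz_sqrt (@dotmx C n) x y).1.
rewrite !dotmxE !mxE; under eq_bigr do rewrite !mxE conjCK.
under [X in sqrtC X * _]eq_bigr do rewrite !mxE -normCK.
by under [X in _ * sqrtC X]eq_bigr do rewrite !mxE -normCK norm_conjC.
Qed.

Lemma row_normsq m n (M : 'M[C]_(m, n)) i : (M *m M ^t*) i i = \sum_j `|M i j| ^+ 2.
Proof. by rewrite !mxE; apply: eq_bigr => j _; rewrite !mxE normCK. Qed.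

Lemma col_normsq m n (M : 'M[C]_(m, n)) i : (M ^t* *m M) i i = \sum_j `|M j i| ^+ 2.
Proof. by rewrite !mxE; apply: eq_bigr => j _; rewrite !mxE normCK mulrC. Qed.

Lemma unitarymx_trC_mul {n} {M : 'M[C]_n} : M \is unitarymx -> M ^t* *m M = 1%:M.
Proof. by rewrite -trmxC_unitary => /unitarymxP; rewrite trmxCK. Qed.

Section Spectral.
Variables (n : nat) (X : 'M[C]_n).
Let G := X ^t* *m X.
Let P := spectralmx G.
Let D := spectral_diag G.
Let Y := X *m P ^t*.

Let PPt : P *m P ^t* = 1%:M.
Proof. exact/unitarymxP/spectral_unitarymx. Qed.

Let PtP : P ^t* *m P = 1%:M.
Proof. exact/unitarymx_trC_mul/spectral_unitarymx. Qed.

Let G_spectral : G = P ^t* *m diag_mx D *m P.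
Proof.
have G_normal : G \is normalmx.
  by apply/normalmxP; rewrite {1}/G !trmx_mul !map_mxM trmxCK.
by have := orthomx_spectralP G_normal; rewrite -invmx_unitary ?spectral_unitarymx.
Qed.

Let spectral_diagE i : D 0 i = \sum_j `|Y j i| ^+ 2.
Proof.
have YtY : Y ^t* *m Y = diag_mx D.
  rewrite /Y !trmx_mul !map_mxM trmxCK !mulmxA -(mulmxA P) -/G G_spectral.
  by rewrite !mulmxA PPt mul1mx -mulmxA PPt mulmx1.
by rewrite -col_normsq YtY mxE eqxx mulr1n.
Qed.

Let spectral_diag_ge0 i : 0 <= D 0 i.
Proof. by rewrite spectral_diagE; apply: sumr_ge0 => j _; rewrite exprn_ge0. Qed.

(* The right-hand side is the trace norm of X. *)
Lemma trace_unitary_mul_le (Z : 'M[C]_n) : Z *m Z ^t* = 1%:M ->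
  `|\tr (Z *m X)| <= \sum_i sqrtC (D 0 i).
Proof.
move=> ZU.
have -> : \tr (Z *m X) = \tr (P *m Z *m Y).
  rewrite /Y [RHS]mxtrace_mulC !mulmxA -(mulmxA X) PtP mulmx1.
  exact: mxtrace_mulC.
have PZU : (P *m Z) *m (P *m Z) ^t* = 1%:M.
  by rewrite trmx_mul map_mxM mulmxA -(mulmxA P) ZU mulmx1 PPt.
rewrite /mxtrace; apply: le_trans; first exact: ler_norm_sum.
apply: ler_sum => i _; rewrite mxE; apply: le_trans; first exact: cauchy_schwarz_sum.
by rewrite -row_normsq PZU mxE eqxx mulr1n sqrtC1 mul1r spectral_diagE.
Qed.

(* Each diagonal entry of X^* X is a convex mixture, with weights |P i j|^2,
   of its eigenvalues; concavity of sqrt (in the form of Cauchy-Schwarz) then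
   bounds the sum of the singular values by that of the column norms of X. *)
Lemma sum_sqrt_spectral_le : \sum_i sqrtC (D 0 i) <= \sum_j sqrtC (G j j).
Proof.
have colP j : \sum_i `|P i j| ^+ 2 = 1 by rewrite -col_normsq PtP mxE eqxx.
have rowP i : \sum_j `|P i j| ^+ 2 = 1 by rewrite -row_normsq PPt mxE eqxx.
have sqrtD_ge0 i : 0 <= sqrtC (D 0 i) by rewrite sqrtC_ge0 spectral_diag_ge0.
have mixture_le j : \sum_i `|P i j| ^+ 2 * sqrtC (D 0 i) <= sqrtC (G j j).
  have := cauchy_schwarz_sum _ (fun i => `|P i j|) (fun i => `|P i j| * sqrtC (D 0 i)).
  under eq_bigr do rewrite mulrA -expr2.
  rewrite ger0_norm; last by apply: sumr_ge0 => i _; rewrite mulr_ge0 ?exprn_ge0.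
  under [X in sqrtC X * _]eq_bigr do rewrite normr_id.
  suff -> : \sum_i `| `|P i j| * sqrtC (D 0 i)| ^+ 2 = G j j.
    by rewrite colP sqrtC1 mul1r.
  rewrite G_spectral mul_mx_diag mxE; apply: eq_bigr => i _.
  by rewrite normrM normr_id exprMn ger0_norm // sqrtCK !mxE normCK; ring.
apply: le_trans (ler_sum _ (fun j _ => mixture_le j)).
by rewrite exchange_big; apply: ler_sum => i _; rewrite -mulr_suml rowP mul1r.
Qed.

End Spectral.
End TraceNorm.

Section Families.
Context {C : numClosedFieldType} {T : finType}.

Definition orthonormal_rows (f : T -> T -> C) :=
  forall a b, \sum_r f a r * (f b r)^* = (a == b)%:R.

Definition orthonormal_cols (f : T -> T -> C) :=
  forall r c, \sum_a f a r * (f a c)^* = (r == c)%:R.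

Lemma sum_enum_val (F : T -> C) : \sum_(i < #|T|) F (enum_val i) = \sum_x F x.
Proof. by rewrite -big_enum_val. Qed.

Lemma trnorm_ge_trace (X Z : op C T T) : orthonormal_rows Z ->
  `|\sum_c \sum_r Z c r * X r c| <= trnorm X.
Proof.
move=> ZU; pose Zm := mx_of_op Z.
have ZmU : Zm *m Zm ^t* = 1%:M.
  apply/matrixP => i j; rewrite !mxE; under eq_bigr do rewrite !mxE.
  by rewrite (sum_enum_val (fun r => Z _ r * (Z _ r)^*)) ZU (inj_eq enum_val_inj).
suff <- : \tr (Zm *m mx_of_op X) = \sum_c \sum_r Z c r * X r c.
  exact: trace_unitary_mul_le.
rewrite /mxtrace -sum_enum_val; apply: eq_bigr => i _.
by rewrite !mxE -sum_enum_val; apply: eq_bigr => j _; rewrite !mxE.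
Qed.

Lemma trnorm_le_col_norms (X : op C T T) :
  trnorm X <= \sum_c sqrtC (\sum_r `|X r c| ^+ 2).
Proof.
apply: le_trans; first exact: sum_sqrt_spectral_le.
rewrite -sum_enum_val; apply: ler_sum => j _; rewrite col_normsq.
by rewrite -sum_enum_val; under eq_bigr do rewrite mxE.
Qed.

Lemma orthonormal_rows_perm {f : T -> T -> C} {p : T -> T} :
  injective p -> orthonormal_rows f -> orthonormal_rows (fun a => f (p a)).
Proof. by move=> p_inj fON a b; rewrite fON (inj_eq p_inj). Qed.

Lemma orthonormal_cols_perm {f : T -> T -> C} {p : T -> T} :
  injective p -> orthonormal_cols f -> orthonormal_cols (fun a => f (p a)).
Proof. by move=> p_inj fON r c; rewrite -fON [RHS](reindex_inj p_inj). Qed.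

(* [X = \sum_a |f_a> y_a <g_a|] with orthonormal [f_a] and an orthonormal
   basis [g_a]; testing against the unitary [Z = \sum_a |g_a> ph_a <f_a|],
   with phases [ph_a] making every [ph_a y_a] nonnegative, gives
   [Tr (Z X) = \sum_a |y_a|]. *)
Section DecompositionLowerBound.
Context {X : op C T T} {f g : T -> T -> C} {y : T -> C}.
Hypotheses (fON : orthonormal_rows f) (gON : orthonormal_rows g)
  (gCP : orthonormal_cols g).
Hypothesis XE : forall r c, X r c = \sum_a f a r * y a * (g a c)^*.

Let ph a := if y a == 0 then 1 else `|y a| / y a.

Let phyE a : ph a * y a = `|y a|.
Proof.
rewrite /ph; case: eqP => [->|/eqP ya]; first by rewrite normr0 mulr0.
by rewrite divfK.
Qed.

Let ph_unit a : ph a * (ph a)^* = 1.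
Proof.
rewrite /ph; case: eqP => [_|/eqP ya]; first by rewrite conjC1 mulr1.
by rewrite -normCK normf_div normr_id divff ?expr1n // normr_eq0.
Qed.

Let Z c r := \sum_a ph a * g a c * (f a r)^*.

Let sum_f_conj a b : \sum_r (f a r)^* * f b r = (b == a)%:R.
Proof. by rewrite -fON; apply: eq_bigr => r _; rewrite mulrC. Qed.

Let Z_orthonormal : orthonormal_rows Z.
Proof.
move=> c c'; rewrite -gCP.
transitivity (\sum_r \sum_a \sum_b
    (ph a * g a c * (ph b * g b c')^*) * ((f a r)^* * f b r)).
  apply: eq_bigr => r _; rewrite /Z rmorph_sum mulr_suml.
  apply: eq_bigr => a _; rewrite mulr_sumr; apply: eq_bigr => b _.
  by rewrite !rmorphM /= conjCK; ring.
rewrite exchange_big; under eq_bigr do rewrite exchange_big.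
under eq_bigr do under eq_bigr do rewrite /= -mulr_sumr sum_f_conj.
apply: eq_bigr => a _; rewrite sum_mul_delta !rmorphM /=.
by rewrite -[RHS]mul1r -(ph_unit a); ring.
Qed.

Let trace_ZX : \sum_c \sum_r Z c r * X r c = \sum_a `|y a|.
Proof.
transitivity (\sum_c \sum_r \sum_a \sum_b
    (ph a * g a c * y b * (g b c)^*) * ((f a r)^* * f b r)).
  apply: eq_bigr => c _; apply: eq_bigr => r _; rewrite /Z XE mulr_suml.
  apply: eq_bigr => a _; rewrite mulr_sumr; apply: eq_bigr => b _; ring.
under eq_bigr do rewrite exchange_big; under eq_bigr do under eq_bigr do rewrite exchange_big.
under eq_bigr do under eq_bigr do under eq_bigr do rewrite /= -mulr_sumr sum_f_conj.
under eq_bigr do under eq_bigr do rewrite sum_mul_delta.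
rewrite exchange_big; apply: eq_bigr => a _ /=.
rewrite (eq_bigr (fun c => ph a * y a * (g a c * (g a c)^*))); last by move=> c _; ring.
by rewrite -mulr_sumr gON eqxx mulr1 phyE.
Qed.

Lemma trnorm_ge_sum_norm_coef : \sum_a `|y a| <= trnorm X.
Proof.
have := @trnorm_ge_trace X Z Z_orthonormal.
by rewrite trace_ZX ger0_norm // sumr_ge0.
Qed.

End DecompositionLowerBound.

Lemma trnorm_le_weighted_perm {X : op C T T} {p : T -> T} {y : T -> C} :
  involutive p -> (forall r c, X r c = y r * (p r == c)%:R) ->
  trnorm X <= \sum_a `|y a|.
Proof.
move=> pK XE; apply: le_trans (trnorm_le_col_norms X) _.
rewrite [leRHS](reindex_inj (inv_inj pK)); apply: ler_sum => c _.
suff -> : \sum_r `|X r c| ^+ 2 = `|y (p c)| ^+ 2 by rewrite sqrCK.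
rewrite -(sum_mul_delta (fun r => `|y r| ^+ 2) (p c)); apply: eq_bigr => r _.
rewrite XE normrM -(can_eq pK) pK.
by case: (r == p c); rewrite ?normr1 ?normr0 ?mulr1 ?mulr0 ?expr0n.
Qed.

End Families.

Section Unitary.
Context {C : numClosedFieldType}.
Variable d : nat.

Lemma unitarymx1 : (1%:M : 'M[C]_d) \is unitarymx.
Proof. by apply/unitarymxP; rewrite trmx1 map_mx1 mulmx1. Qed.

Variable U : 'M[C]_d.
Hypothesis UU : U \is unitarymx.

Lemma unitary_orthonormal_rows : orthonormal_rows U.
Proof.
move=> k k'; have /unitarymxP/matrixP/(_ k k') := UU.
by rewrite !mxE => <-; apply: eq_bigr => x _; rewrite !mxE.
Qed.

Lemma unitary_orthonormal_cols : orthonormal_cols U.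
Proof.
move=> a a'; have /matrixP/(_ a' a) := unitarymx_trC_mul UU.
by rewrite !mxE eq_sym => <-; apply: eq_bigr => k _; rewrite !mxE mulrC.
Qed.

Lemma unitary_sum_conj_mul k m : \sum_x (U k x)^* * U m x = (m == k)%:R.
Proof.
by rewrite -unitary_orthonormal_rows; apply: eq_bigr => x _; rewrite mulrC.
Qed.

End Unitary.

Section Minimum.
Context {C : numClosedFieldType}.
Variables (T1 T2 : finType) (d : nat) (q : C).

Let negativity_ge (t : C) : 1 + 2 * q <= t -> q <= (t - 1) / 2.
Proof.
move=> le_t; have -> : (t - 1) / 2 = q + (t - (1 + 2 * q)) / 2 by field.
by rewrite lerDl divr_ge0 ?ler0n // subr_ge0.
Qed.

Let negativity_eq (t : C) : t = 1 + 2 * q -> (t - 1) / 2 = q.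
Proof. by move->; field. Qed.

Lemma is_min_negativity (X : 'M[C]_d -> op C (T1 * T2)%type (T1 * T2)%type) :
  trnorm (ptrans (X 1%:M)) = 1 + 2 * q ->
  (forall U, U \is unitarymx -> 1 + 2 * q <= trnorm (ptrans (X U))) ->
  is_min_over_unitaries (fun U => negativity (X U)) q.
Proof.
move=> X1 Xge; split; last by move=> U /Xge /negativity_ge.
by exists 1%:M; [exact: unitarymx1 | exact: negativity_eq].
Qed.

Lemma is_min2_negativity (X : 'M[C]_d -> 'M[C]_d -> op C (T1 * T2)%type (T1 * T2)%type) :
  trnorm (ptrans (X 1%:M 1%:M)) = 1 + 2 * q ->
  (forall U U', U \is unitarymx -> U' \is unitarymx ->
     1 + 2 * q <= trnorm (ptrans (X U U'))) ->
  is_min_over_unitaries2 (fun U U' => negativity (X U U')) q.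
Proof.
move=> X1 Xge; split; last by move=> U U' UU /(Xge _ _ UU) /negativity_ge.
by exists 1%:M, 1%:M; split; [exact: unitarymx1 | exact: unitarymx1 | exact: negativity_eq].
Qed.

End Minimum.

Section Werner.
Context {C : numClosedFieldType}.
Variables (d : nat) (beta : C).
Hypotheses (d_ge2 : (2 <= d)%N) (beta_real : beta \is Num.real) (beta_le1 : `|beta| <= 1).
Let N := (d%:R ^+ 2 + d%:R * beta : C).

Definition werner_negativity := `|beta| * (d%:R - 1) / (2 * (d%:R + beta)).

Lemma sum_werner_mul x (F : 'I_d * 'I_d -> C) :
  \sum_y werner d beta x y * F y = (F x + beta * F (x.2, x.1)) / N.
Proof.
transitivity ((\sum_y ((x == y)%:R * F y + beta * (((x.2, x.1) == y)%:R * F y))) / N).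
  rewrite mulr_suml; apply: eq_bigr => y _; rewrite /werner /swapop.
  have -> : (x.1 == y.2) && (x.2 == y.1) = ((x.2, x.1) == y).
    by case: y => y1 y2; rewrite xpair_eqE andbC.
  by rewrite /N; ring.
by rewrite big_split /= -mulr_sumr !sum_delta_mul.
Qed.

Lemma le_m1_beta : -1 <= beta.
Proof. exact: real_lerNnormlW. Qed.

Lemma d_add_beta_gt0 : 0 < d%:R + beta.
Proof.
have -> : d%:R + beta = (d%:R - 2%:R) + (1 + beta) + 1 by ring.
rewrite ltr_pwDr // addr_ge0 // ?subr_ge0 ?ler_nat //.
by rewrite -lerBlDl sub0r le_m1_beta.
Qed.

Lemma werner_norm_gt0 : 0 < N.
Proof.
have -> : N = d%:R * (d%:R + beta) by rewrite /N; ring.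
by rewrite mulr_gt0 ?d_add_beta_gt0 // ltr0n; case: d d_ge2.
Qed.

Lemma werner_trnorm_value :
  d%:R * (d%:R * (1 + `|beta|) - (`|beta| - beta)) / N = 1 + 2 * werner_negativity.
Proof.
have := d_add_beta_gt0; have := werner_norm_gt0; rewrite /werner_negativity /N.
move=> /lt0r_neq0 N_neq0 /lt0r_neq0 dbeta_neq0.
by field; rewrite dbeta_neq0 N_neq0.
Qed.

End Werner.

Section OneSided.
Context {C : numClosedFieldType}.
Variables (d : nat) (beta : C) (U : 'M[C]_d).
Hypothesis UU : U \is unitarymx.
Let N := (d%:R ^+ 2 + d%:R * beta : C).

Lemma conj_VA_IB_wernerE a b k a' b' m :
  conjop (VA_IB U) (werner d beta) ((a, b), k) ((a', b'), m) =
  U k a * (U m a')^* *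
  (((k == m)%:R * (b == b')%:R + beta * ((U k b')^* * U m b)) / N).
Proof.
rewrite /conjop /mulop; under eq_bigr do rewrite sum_werner_mul.
set V := VA_IB U.
transitivity ((\sum_x V (a, b, k) x * (V (a', b', m) x)^* +
    beta * \sum_x V (a, b, k) x * (V (a', b', m) (x.2, x.1))^*) / N).
  rewrite mulr_sumr -big_split mulr_suml; apply: eq_bigr => x _ /=.
  by rewrite /adjop /N; ring.
rewrite (@sum_pair_mul _ _ _ _
    (fun x1 => U k a * (U m a')^* * ((U k x1)^* * U m x1))
    (fun x2 => (b == x2)%:R * (b' == x2)%:R)); last first.
  by move=> x1 x2; rewrite /V /VA_IB /measV /= !rmorphM /= conjCK conjC_nat; ring.
rewrite (@sum_pair_mul _ _ _ _
    (fun x1 => U k a * (U m a')^* * ((U k x1)^* * (b' == x1)%:R))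
    (fun x2 => (b == x2)%:R * U m x2)); last first.
  by move=> x1 x2; rewrite /V /VA_IB /measV /= !rmorphM /= conjCK conjC_nat; ring.
rewrite -!mulr_sumr unitary_sum_conj_mul // !sum_delta_mul.
rewrite (eq_bigr (fun x => (b' == x)%:R * (U k x)^*)); last by move=> x _; rewrite mulrC.
by rewrite sum_delta_mul (eq_sym m) (eq_sym b); ring.
Qed.

(* In the basis |s_p s_q j> of AB A', the partial transpose of the measured
   state sends |s_q s_p p> to ((p == q) + beta)/N |s_p s_q q> and, for q != j,
   |s_p s_q j> to (p == j)/N times itself. *)
Definition meas_basis1 (al r : ('I_d * 'I_d) * 'I_d) : C :=
  U al.1.1 r.1.1 * U al.1.2 r.1.2 * (al.2 == r.2)%:R.

Definition flip1 (al : ('I_d * 'I_d) * 'I_d) : ('I_d * 'I_d) * 'I_d :=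
  if al.1.2 == al.2 then ((al.1.2, al.1.1), al.1.1) else al.

Definition meas_coef1 (al : ('I_d * 'I_d) * 'I_d) : C :=
  ((al.1.1 == al.2)%:R + beta * (al.1.2 == al.2)%:R) / N.

Lemma flip1K : involutive flip1.
Proof.
case=> [[p q] j]; rewrite /flip1 /=.
by have [<-|/negPf->] := eqVneq q j; rewrite ?eqxx.
Qed.

Lemma meas_basis1_orthonormal_rows : orthonormal_rows meas_basis1.
Proof.
case=> [[p q] j] [[p' q'] j'].
rewrite (sum_pair_mul (fun ab => U p ab.1 * (U p' ab.1)^* * (U q ab.2 * (U q' ab.2)^*))
    (fun k => (j == k)%:R * (j' == k)%:R)); last first.
  by move=> [a b] k; rewrite /meas_basis1 /= !rmorphM /= conjC_nat; ring.
rewrite (sum_pair_mul (fun a => U p a * (U p' a)^*) (fun b => U q b * (U q' b)^*)) //.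
rewrite !unitary_orthonormal_rows // sum_delta_mul !natr_pair_eq.
by rewrite (eq_sym j'); ring.
Qed.

Lemma meas_basis1_orthonormal_cols : orthonormal_cols meas_basis1.
Proof.
case=> [[a b] k] [[a' b'] k'].
rewrite (sum_pair_mul (fun pq => U pq.1 a * (U pq.1 a')^* * (U pq.2 b * (U pq.2 b')^*))
    (fun j => (j == k)%:R * (j == k')%:R)); last first.
  by move=> [p q] j; rewrite /meas_basis1 /= !rmorphM /= conjC_nat; ring.
rewrite (sum_pair_mul (fun p => U p a * (U p a')^*) (fun q => U q b * (U q b')^*)) //.
by rewrite !unitary_orthonormal_cols // sum_mul_delta !natr_pair_eq (eq_sym k').
Qed.

Lemma meas_coef1_flip al r c :
  meas_basis1 al r * meas_coef1 al * (meas_basis1 (flip1 al) c)^* =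
  ((al.1.1 == al.2)%:R * (meas_basis1 al r * (meas_basis1 al c)^*) +
   beta * ((al.1.2 == al.2)%:R *
           (meas_basis1 al r * (meas_basis1 ((al.2, al.1.1), al.1.1) c)^*))) / N.
Proof.
case: al => [[p q] j]; rewrite /flip1 /meas_coef1 /=.
have [<-|_] := eqVneq q j; last by rewrite mulr0n; ring.
by have [->|_] := eqVneq p q; rewrite ?mulr0n ?mulr1n; ring.
Qed.

Let sum_diag_part a b k a' b' k' :
  \sum_al (al.1.1 == al.2)%:R *
    (meas_basis1 al (a, b, k) * (meas_basis1 al (a', b', k'))^*) =
  U k a * (U k a')^* * ((k == k')%:R * (b == b')%:R).
Proof.
rewrite !sum_pair.
transitivity (\sum_p \sum_q (k == p)%:R *
    (U p a * (U p a')^* * (k == k')%:R * (U q b * (U q b')^*))).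
  apply: eq_bigr => p _; apply: eq_bigr => q _.
  transitivity (\sum_j (p == j)%:R *
      (U p a * (U p a')^* * (j == k')%:R * (U q b * (U q b')^*)) * (j == k)%:R).
    by apply: eq_bigr => j _; rewrite /meas_basis1 /= !rmorphM /= conjC_nat; ring.
  by rewrite [k == p]eq_sym; exact: sum_mul_delta.
rewrite exchange_big; under eq_bigr do rewrite sum_delta_mul.
rewrite -mulr_sumr unitary_orthonormal_cols //; ring.
Qed.

Let sum_swap_part a b k a' b' k' :
  \sum_al (al.1.2 == al.2)%:R *
    (meas_basis1 al (a, b, k) * (meas_basis1 ((al.2, al.1.1), al.1.1) (a', b', k'))^*) =
  U k' a * U k b * (U k a' * U k' b')^*.
Proof.
rewrite !sum_pair.
transitivity (\sum_p \sum_q (k == q)%:R *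
    ((k' == p)%:R * (U p a * U q b * (U k a' * U p b')^*))).
  apply: eq_bigr => p _; apply: eq_bigr => q _.
  transitivity (\sum_j (q == j)%:R *
      ((p == k')%:R * (U p a * U q b * (U j a' * U p b')^*)) * (j == k)%:R).
    by apply: eq_bigr => j _; rewrite /meas_basis1 /= !rmorphM /= conjC_nat; ring.
  by rewrite [k == q]eq_sym [k' == p]eq_sym; exact: sum_mul_delta.
under eq_bigr do rewrite sum_delta_mul.
by rewrite sum_delta_mul.
Qed.

Lemma ptrans_conj_VA_IB_decomp r c :
  ptrans (conjop (VA_IB U) (werner d beta)) r c =
  \sum_al meas_basis1 al r * meas_coef1 al * (meas_basis1 (flip1 al) c)^*.
Proof.
case: r => [[a b] k]; case: c => [[a' b'] k'].
rewrite /ptrans /= conj_VA_IB_wernerE.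
under eq_bigr do rewrite meas_coef1_flip.
rewrite -mulr_suml big_split /= -mulr_sumr sum_diag_part sum_swap_part.
rewrite !rmorphM /= (eq_sym k k').
by have [->|_] := eqVneq k' k; rewrite ?mulr0n; ring.
Qed.

Lemma sum_norm_meas_coef1_le_trnorm :
  \sum_al `|meas_coef1 al| <= trnorm (ptrans (conjop (VA_IB U) (werner d beta))).
Proof.
apply: (trnorm_ge_sum_norm_coef meas_basis1_orthonormal_rows
  (orthonormal_rows_perm (inv_inj flip1K) meas_basis1_orthonormal_rows)
  (orthonormal_cols_perm (inv_inj flip1K) meas_basis1_orthonormal_cols)
  ptrans_conj_VA_IB_decomp).
Qed.

End OneSided.

Section OneSidedValue.
Context {C : numClosedFieldType}.
Variables (d : nat) (beta : C).
Hypotheses (d_ge2 : (2 <= d)%N) (beta_real : beta \is Num.real) (beta_le1 : `|beta| <= 1).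
Let N := (d%:R ^+ 2 + d%:R * beta : C).

Let norm_natr_add_beta (x y : bool) :
  `|x%:R + beta * y%:R| = x%:R + `|beta| * y%:R - (`|beta| - beta) * (x%:R * y%:R).
Proof.
case: x; case: y; rewrite /= ?mulr1 ?mulr0 ?add0r ?addr0 ?normr1 ?normr0 ?subr0 ?oppr0 //.
rewrite ger0_norm; first by ring.
by rewrite -lerBlDl sub0r le_m1_beta.
Qed.

Lemma sum_norm_meas_coef1 : \sum_al `|meas_coef1 d beta al| = 1 + 2 * werner_negativity d beta.
Proof.
rewrite -werner_trnorm_value // !sum_pair.
have N_gt0 : 0 < N by exact: werner_norm_gt0.
under eq_bigr do under eq_bigr do under eq_bigr do
  rewrite /meas_coef1 /= normrM normfV (gtr0_norm N_gt0) norm_natr_add_beta.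
have sum_j (p q : 'I_d) : \sum_j ((p == j)%:R + `|beta| * (q == j)%:R -
      (`|beta| - beta) * ((p == j)%:R * (q == j)%:R)) / N =
    (1 + `|beta| - (`|beta| - beta) * (p == q)%:R) / N.
  rewrite -mulr_suml sumrB big_split /= -!mulr_sumr !sum_delta.
  by rewrite sum_delta_mul mulr1 eq_sym.
have sum_q (p : 'I_d) : \sum_q (1 + `|beta| - (`|beta| - beta) * (p == q)%:R) / N =
    (d%:R * (1 + `|beta|) - (`|beta| - beta)) / N.
  by rewrite -mulr_suml sumrB -mulr_sumr sum_delta sum_ord_const mulr1.
under eq_bigr do under eq_bigr do rewrite sum_j.
under eq_bigr do rewrite sum_q.
by rewrite sum_ord_const mulrA.
Qed.

End OneSidedValue.

Lemma meas_basis1_idmx {C : numClosedFieldType} d (al r : ('I_d * 'I_d) * 'I_d) :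
  meas_basis1 d (1%:M : 'M[C]_d) al r = (al == r)%:R.
Proof. by case: al r => [[p q] j] [[a b] k]; rewrite /meas_basis1 /= !mxE !natr_pair_eq. Qed.

Lemma QA_werner {C : numClosedFieldType} d (beta : C) :
  (2 <= d)%N -> beta \is Num.real -> `|beta| <= 1 ->
  QA_N_eq (werner d beta) (werner_negativity d beta).
Proof.
move=> d_ge2 beta_real beta_le1.
apply: is_min_negativity => [|U UU]; rewrite -sum_norm_meas_coef1 //; last first.
  exact: sum_norm_meas_coef1_le_trnorm.
apply/eqP; rewrite eq_le sum_norm_meas_coef1_le_trnorm ?unitarymx1 // andbT.
apply: (trnorm_le_weighted_perm (@flip1K d)) => r c.
rewrite ptrans_conj_VA_IB_decomp ?unitarymx1 //.
under eq_bigr => al _ do rewrite !meas_basis1_idmx conjC_nat [al == r]eq_sym -mulrA.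
exact: sum_delta_mul.
Qed.

Section TwoSided.
Context {C : numClosedFieldType}.
Variables (d : nat) (beta : C) (U U' : 'M[C]_d).
Hypotheses (UU : U \is unitarymx) (UU' : U' \is unitarymx).
Let N := (d%:R ^+ 2 + d%:R * beta : C).

(* [overlap k n] is the inner product <s_k|s'_n> of the two measured bases. *)
Definition overlap : 'M[C]_d := (U ^ Num.conj)%sesqui *m U'^T.

Lemma overlapE k n : overlap k n = \sum_x (U k x)^* * U' n x.
Proof. by rewrite !mxE; apply: eq_bigr => x _; rewrite !mxE. Qed.

Lemma conj_overlapE m l : (overlap m l)^* = \sum_x (U' l x)^* * U m x.
Proof.
by rewrite overlapE rmorph_sum; apply: eq_bigr => x _; rewrite rmorphM /= conjCK mulrC.
Qed.

Lemma overlap_unitary : overlap \is unitarymx.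
Proof. by rewrite mul_unitarymx ?conjC_unitary ?trmx_unitary. Qed.

Lemma conj_VA_VB_wernerE a b k l a' b' m n :
  conjop (VA_VB U U') (werner d beta) ((a, b), (k, l)) ((a', b'), (m, n)) =
  U k a * U' l b * (U m a' * U' n b')^* *
  (((k == m)%:R * (l == n)%:R + beta * (overlap k n * (overlap m l)^*)) / N).
Proof.
rewrite /conjop /mulop; under eq_bigr do rewrite sum_werner_mul.
set V := VA_VB U U'.
transitivity ((\sum_x V (a, b, (k, l)) x * (V (a', b', (m, n)) x)^* +
    beta * \sum_x V (a, b, (k, l)) x * (V (a', b', (m, n)) (x.2, x.1))^*) / N).
  rewrite mulr_sumr -big_split mulr_suml; apply: eq_bigr => x _ /=.
  by rewrite /adjop /N; ring.
rewrite (@sum_pair_mul _ _ _ _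
    (fun x1 => U k a * U' l b * (U m a' * U' n b')^* * ((U k x1)^* * U m x1))
    (fun x2 => (U' l x2)^* * U' n x2)); last first.
  by move=> x1 x2; rewrite /V /VA_VB /measV /= !rmorphM /= !conjCK; ring.
rewrite (@sum_pair_mul _ _ _ _
    (fun x1 => U k a * U' l b * (U m a' * U' n b')^* * ((U k x1)^* * U' n x1))
    (fun x2 => (U' l x2)^* * U m x2)); last first.
  by move=> x1 x2; rewrite /V /VA_VB /measV /= !rmorphM /= !conjCK; ring.
rewrite -!mulr_sumr !unitary_sum_conj_mul // -overlapE -conj_overlapE.
by rewrite (eq_sym m) (eq_sym n); ring.
Qed.

(* In the basis |s_m s'_n k l> of AB A'B', the partial transpose of the
   measured state sends |s_k s'_l m n> to meas_coef2 ((m, n), (k, l)) times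
   |s_m s'_n k l>. *)
Definition meas_basis2 (al r : ('I_d * 'I_d) * ('I_d * 'I_d)) : C :=
  U al.1.1 r.1.1 * U' al.1.2 r.1.2 * (al.2 == r.2)%:R.

Definition flip2 (al : ('I_d * 'I_d) * ('I_d * 'I_d)) := (al.2, al.1).

Definition meas_coef2 (al : ('I_d * 'I_d) * ('I_d * 'I_d)) : C :=
  ((al.1 == al.2)%:R + beta * (overlap al.1.1 al.2.2 * (overlap al.2.1 al.1.2)^*)) / N.

Lemma flip2K : involutive flip2.
Proof. by case. Qed.

Lemma ptrans_conj_VA_VB_decomp r c :
  ptrans (conjop (VA_VB U U') (werner d beta)) r c =
  \sum_al meas_basis2 al r * meas_coef2 al * (meas_basis2 (flip2 al) c)^*.
Proof.
case: r => [[a b] [k l]]; case: c => [[a' b'] [k' l']].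
rewrite /ptrans /= conj_VA_VB_wernerE sum_pair.
transitivity (\sum_mn (U mn.1 a * U' mn.2 b * meas_coef2 (mn, (k, l)) *
    (U k a' * U' l b')^*) * (mn == (k', l'))%:R).
  by rewrite sum_mul_delta /meas_coef2 /= natr_pair_eq; ring.
apply: eq_bigr => mn _.
transitivity (\sum_pq (U mn.1 a * U' mn.2 b * meas_coef2 (mn, pq) *
    (U pq.1 a' * U' pq.2 b')^* * (mn == (k', l'))%:R) * (pq == (k, l))%:R).
  by rewrite sum_mul_delta.
apply: eq_bigr => pq _.
by rewrite /meas_basis2 /flip2 /= !rmorphM /= conjC_nat; ring.
Qed.

Lemma meas_basis2_orthonormal_rows : orthonormal_rows meas_basis2.
Proof.
case=> [[m n] pq] [[m' n'] pq'].
rewrite (sum_pair_mul (fun ab => U m ab.1 * (U m' ab.1)^* * (U' n ab.2 * (U' n' ab.2)^*))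
    (fun kl => (pq == kl)%:R * (pq' == kl)%:R)); last first.
  by move=> [a b] kl; rewrite /meas_basis2 /= !rmorphM /= conjC_nat; ring.
rewrite (sum_pair_mul (fun a => U m a * (U m' a)^*) (fun b => U' n b * (U' n' b)^*)) //.
by rewrite !unitary_orthonormal_rows // sum_delta_mul (eq_sym pq') !natr_pair_eq.
Qed.

Lemma meas_basis2_orthonormal_cols : orthonormal_cols meas_basis2.
Proof.
case=> [[a b] kl] [[a' b'] kl'].
rewrite (sum_pair_mul (fun mn => U mn.1 a * (U mn.1 a')^* * (U' mn.2 b * (U' mn.2 b')^*))
    (fun pq => (pq == kl)%:R * (pq == kl')%:R)); last first.
  by move=> [m n] pq; rewrite /meas_basis2 /= !rmorphM /= conjC_nat; ring.
rewrite (sum_pair_mul (fun m => U m a * (U m a')^*) (fun n => U' n b * (U' n b')^*)) //.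
by rewrite !unitary_orthonormal_cols // sum_mul_delta (eq_sym kl') !natr_pair_eq.
Qed.

Lemma sum_norm_meas_coef2_le_trnorm :
  \sum_al `|meas_coef2 al| <= trnorm (ptrans (conjop (VA_VB U U') (werner d beta))).
Proof.
apply: (trnorm_ge_sum_norm_coef meas_basis2_orthonormal_rows
  (orthonormal_rows_perm (inv_inj flip2K) meas_basis2_orthonormal_rows)
  (orthonormal_cols_perm (inv_inj flip2K) meas_basis2_orthonormal_cols)
  ptrans_conj_VA_VB_decomp).
Qed.

End TwoSided.

Section TwoSidedBound.
Context {C : numClosedFieldType}.
Variables (d : nat) (beta : C) (U U' : 'M[C]_d).
Hypotheses (UU : U \is unitarymx) (UU' : U' \is unitarymx).
Hypotheses (d_ge2 : (2 <= d)%N) (beta_real : beta \is Num.real) (beta_le1 : `|beta| <= 1).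
Let N := (d%:R ^+ 2 + d%:R * beta : C).
Let A := overlap d U U'.

Lemma overlap_row_normsq m : \sum_n `|A m n| ^+ 2 = 1.
Proof.
by rewrite -row_normsq (unitarymxP (overlap_unitary _ _ _ UU UU')) mxE eqxx.
Qed.

Lemma overlap_col_normsq n : \sum_m `|A m n| ^+ 2 = 1.
Proof.
by rewrite -col_normsq (unitarymx_trC_mul (overlap_unitary _ _ _ UU UU')) mxE eqxx.
Qed.

Lemma norm_overlap_le1 m n : `|A m n| <= 1.
Proof.
rewrite -(@expr_le1 _ 2) // -(overlap_row_normsq m) (bigD1 n) //= lerDl.
by apply: sumr_ge0 => i _; rewrite exprn_ge0.
Qed.

(* The squared overlaps form a doubly stochastic matrix; bounding the
   off-diagonal products |A m q| |A p n| below by their squares makes the sum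
   of the bound independent of the bases. *)
Definition meas_coef2_lb (al : ('I_d * 'I_d) * ('I_d * 'I_d)) : C :=
  ((al.1 == al.2)%:R * (1 + (beta - `|beta|) * `|A al.1.1 al.1.2| ^+ 2) +
   `|beta| * (`|A al.1.1 al.2.2| ^+ 2 * `|A al.2.1 al.1.2| ^+ 2)) / N.

Let N_gt0 : 0 < N := werner_norm_gt0 _ _ d_ge2 beta_real beta_le1.

Let add1_beta_mul_ge0 (t : C) : 0 <= t -> t <= 1 -> 0 <= 1 + beta * t.
Proof.
move=> t_ge0 t_le1; rewrite -lerBlDl sub0r.
apply: real_lerNnormlW; first by rewrite rpredM // ger0_real.
by rewrite normrM (ger0_norm t_ge0) -(mulr1 1) ler_pM.
Qed.

Let norm_meas_coef2_diag m n :
  `|meas_coef2 d beta U U' ((m, n), (m, n))| = (1 + beta * `|A m n| ^+ 2) / N.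
Proof.
rewrite /meas_coef2 /= eqxx -normCK ger0_norm // divr_ge0 ?(ltW N_gt0) //.
by apply: add1_beta_mul_ge0; rewrite ?exprn_ge0 ?exprn_ile1 ?norm_overlap_le1.
Qed.

Let norm_meas_coef2_offdiag m n p q : (m, n) != (p, q) ->
  `|meas_coef2 d beta U U' ((m, n), (p, q))| = `|beta| * (`|A m q| * `|A p n|) / N.
Proof.
move=> /negPf neq; rewrite /meas_coef2 /= neq add0r normrM normfV (gtr0_norm N_gt0).
by rewrite !normrM norm_conjC.
Qed.

Lemma meas_coef2_lb_le al : meas_coef2_lb al <= `|meas_coef2 d beta U U' al|.
Proof.
case: al => [[m n] [p q]]; rewrite /meas_coef2_lb /=.
have [[<- <-]|neq] := eqVneq (m, n) (p, q).
  rewrite norm_meas_coef2_diag ler_pM2r ?invr_gt0 // mul1r -subr_ge0.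
  set t := `|A m n| ^+ 2.
  have -> : 1 + beta * t - (1 + (beta - `|beta|) * t + `|beta| * (t * t)) =
            `|beta| * (t - t ^+ 2) by ring.
  by rewrite mulr_ge0 // subr_ge0 ler_iXnr ?exprn_ge0 ?exprn_ile1 ?norm_overlap_le1.
rewrite norm_meas_coef2_offdiag // mul0r add0r ler_pM2r ?invr_gt0 //.
by rewrite ler_wpM2l // ler_pM ?exprn_ge0 // ler_iXnr ?norm_overlap_le1.
Qed.

Lemma meas_coef2_lb_eq : (forall m n, `|A m n| ^+ 2 = `|A m n|) ->
  forall al, `|meas_coef2 d beta U U' al| = meas_coef2_lb al.
Proof.
move=> normA_sq [[m n] [p q]]; rewrite /meas_coef2_lb /=.
have [[<- <-]|neq] := eqVneq (m, n) (p, q).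
  rewrite norm_meas_coef2_diag mul1r; congr (_ / _).
  by rewrite -expr2 !normA_sq; ring.
by rewrite norm_meas_coef2_offdiag // mul0r add0r !normA_sq.
Qed.

Lemma sum_meas_coef2_lb : \sum_al meas_coef2_lb al = 1 + 2 * werner_negativity d beta.
Proof.
rewrite -werner_trnorm_value // -mulr_suml /meas_coef2_lb; congr (_ / _).
have sum_diag : \sum_al (al.1 == al.2)%:R *
    (1 + (beta - `|beta|) * `|A al.1.1 al.1.2| ^+ 2) = d%:R * (d%:R + (beta - `|beta|)).
  rewrite sum_pair; under eq_bigr do rewrite /= sum_delta_mul.
  rewrite sum_pair; under eq_bigr do rewrite big_split /= -mulr_sumr overlap_row_normsq.
  by rewrite !sum_ord_const; ring.
have sum_offdiag : \sum_al `|A al.1.1 al.2.2| ^+ 2 * `|A al.2.1 al.1.2| ^+ 2 = d%:R * d%:R.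
  rewrite sum_pair; under eq_bigr do rewrite /= sum_pair /=.
  under eq_bigr do under eq_bigr do rewrite -mulr_suml overlap_row_normsq mul1r.
  under eq_bigr do rewrite overlap_col_normsq.
  by rewrite sum_pair; under eq_bigr do rewrite sum_ord_const mulr1; rewrite sum_ord_const.
by rewrite big_split /= -mulr_sumr sum_diag sum_offdiag; ring.
Qed.

Lemma trnorm_conj_VA_VB_werner_ge :
  1 + 2 * werner_negativity d beta <= trnorm (ptrans (conjop (VA_VB U U') (werner d beta))).
Proof.
rewrite -sum_meas_coef2_lb; apply: le_trans (sum_norm_meas_coef2_le_trnorm _ _ _ _ UU UU').
by apply: ler_sum => al _; exact: meas_coef2_lb_le.
Qed.

Lemma sum_norm_meas_coef2_01 : (forall m n, `|A m n| ^+ 2 = `|A m n|) ->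
  \sum_al `|meas_coef2 d beta U U' al| = 1 + 2 * werner_negativity d beta.
Proof.
move=> normA_sq; rewrite -sum_meas_coef2_lb.
by apply: eq_bigr => al _; exact: meas_coef2_lb_eq.
Qed.

End TwoSidedBound.

Lemma meas_basis2_idmx {C : numClosedFieldType} d al r :
  meas_basis2 d (1%:M : 'M[C]_d) 1%:M al r = (al == r)%:R.
Proof. by case: al r => [[m n] pq] [[a b] kl]; rewrite /meas_basis2 /= !mxE !natr_pair_eq. Qed.

Lemma overlap_idmx {C : numClosedFieldType} d : overlap d (1%:M : 'M[C]_d) 1%:M = 1%:M.
Proof. by rewrite /overlap map_mx1 trmx1 mulmx1. Qed.

Lemma QAB_werner {C : numClosedFieldType} d (beta : C) :
  (2 <= d)%N -> beta \is Num.real -> `|beta| <= 1 ->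
  QAB_N_eq (werner d beta) (werner_negativity d beta).
Proof.
move=> d_ge2 beta_real beta_le1; have unit1 := @unitarymx1 C d.
apply: is_min2_negativity => [|U U' UU UU']; last exact: trnorm_conj_VA_VB_werner_ge.
apply/eqP; rewrite eq_le trnorm_conj_VA_VB_werner_ge // andbT.
have normsq_overlap_idmx m n :
    `|overlap d 1%:M 1%:M m n| ^+ 2 = `|overlap d 1%:M 1%:M m n| :> C.
  by rewrite overlap_idmx mxE; case: (m == n); rewrite ?normr0 ?normr1 ?expr0n ?expr1n.
rewrite -(sum_norm_meas_coef2_01 _ _ _ _ unit1 unit1 d_ge2 beta_real beta_le1
  normsq_overlap_idmx).
apply: (trnorm_le_weighted_perm (@flip2K d)) => r c.
rewrite ptrans_conj_VA_VB_decomp ?unitarymx1 //.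
under eq_bigr => al _ do rewrite !meas_basis2_idmx conjC_nat [al == r]eq_sym -mulrA.
exact: sum_delta_mul.
Qed.

Theorem theorem13 (C : numClosedFieldType) (d : nat) (beta : C) :
  (2 <= d)%N -> beta \is Num.real -> `|beta| <= 1 ->
  let q := `|beta| * (d%:R - 1) / (2 * (d%:R + beta)) in
  QA_N_eq (werner d beta) q /\ QAB_N_eq (werner d beta) q.
Proof.
move=> d_ge2 beta_real beta_le1 q.
by split; [exact: QA_werner | exact: QAB_werner].
Qed.
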